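(* Let $(M,\rho)$ be a metric space, let $f,g:M\to\mathbb{R}\cup\{+\infty\}$, and let $\lambda\in\mathbb{R}$ be such that $L_\lambda(f-g)\cap\operatorname{dom} f\cap\operatorname{dom} g\neq\varnothing$. Let $M_1:=L_\lambda(f-g)$ and $f_1:=f|_{M_1}$, regarded as a function on $(M_1,\rho)$. If $x\in M_1\cap\operatorname{dom} g$ satisfies $|\widetilde\nabla f|(x)>|\widetilde\nabla g|(x)$, then $|\widetilde\nabla f_1|(x)=|\widetilde\nabla f|(x)$.
   Context: Functions take values in $\mathbb{R}\cup\{+\infty\}$; $\operatorname{dom} f:=\{x:f(x)<+\infty\}$; the expression $\infty-\infty$ is undefined. For $\lambda\in\mathbb{R}$, $L_\lambda(f-g):=\{x\in\operatorname{dom} f:\ f(x)-g(x)\le\lambda\}$ (where $f(x)-g(x)=-\infty$ if $g(x)=+\infty$). $[t]^+:=\max\{0,t\}$, with $[f(x)-f(y)]^+:=0$ if $f(y)=+\infty$. For $x\in\operatorname{dom} f$, the global slope is $|\widetilde\nabla f|(x):=\sup_{y\neq x}\frac{[f(x)-f(y)]^+}{\rho(x,y)}\in[0,+\infty]$; for a restriction to a subset, $y$ ranges over the subset. *)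

From mathcomp Require Import all_boot all_order all_algebra.
From mathcomp Require Import all_classical all_reals.
From mathcomp Require Import ereal.
Set Implicit Arguments. Unset Strict Implicit. Unset Printing Implicit Defensive.
Import Order.TTheory GRing.Theory Num.Theory.
Local Open Scope classical_set_scope.
Local Open Scope ring_scope.

Definition is_metric (R : realType) (M : Type) (rho : M -> M -> R) : Prop :=
  [/\ (forall x y, 0 <= rho x y),
      (forall x y, rho x y = 0 <-> x = y),
      (forall x y, rho x y = rho y x) &
      (forall x y z, rho x z <= rho x y + rho y z)].

(* Functions M -> R \cup {+oo}: extended-real valued, never -oo. *)
Definition no_minfty (R : realType) (M : Type) (f : M -> \bar R) : Prop :=
  forall x, f x <> -oo%E.

Definition dom (R : realType) (M : Type) (f : M -> \bar R) : set M :=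
  [set x | (f x < +oo)%E].

(* L_lambda(f - g) = {x in dom f : f x - g x <= lambda},
   where f x - g x = -oo if g x = +oo. *)
Definition sublevel (R : realType) (M : Type) (f g : M -> \bar R) (lam : R)
  : set M :=
  [set x | (f x < +oo)%E /\ (g x = +oo%E \/ (f x - g x <= lam%:E)%E)].

(* The quotient [f x - f y]^+ / rho(x,y), with [f x - f y]^+ := 0 if
   f y = +oo (used for x in dom f). *)
Definition slope_term (R : realType) (M : Type) (rho : M -> M -> R)
  (f : M -> \bar R) (x y : M) : \bar R :=
  match f y with
  | EFin fy => ((Num.max 0 (fine (f x) - fy)) / rho x y)%:E
  | _ => 0%E
  end.

(* Global slope of f at x restricted to the subset A (y ranges over A \ {x});
   the supremum is taken in [0, +oo] (hence the 0, which only matters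
   when A \ {x} is empty). *)
Definition global_slope_on (R : realType) (M : Type) (rho : M -> M -> R)
  (A : set M) (f : M -> \bar R) (x : M) : \bar R :=
  ereal_sup ([set 0%E] `|` [set slope_term rho f x y | y in A `\ x]).

Definition global_slope (R : realType) (M : Type) (rho : M -> M -> R)
  (f : M -> \bar R) (x : M) : \bar R :=
  global_slope_on rho setT f x.

From mathcomp Require Import all_boot all_order all_algebra.
From mathcomp Require Import all_classical all_reals.
From mathcomp Require Import ereal.
From mathcomp Require Import lra.
Import Order.TTheory GRing.Theory Num.Theory.
Local Open Scope classical_set_scope.
Local Open Scope ring_scope.

(* Shrinking A
   can only lower it, and it does not change as long as A keeps every point y
   whose quotient exceeds some level c lying below the full supremum
   ([global_slope_on_eq_of_steep]).

   For the theorem we take c := |~grad g|(x).  If the quotient of f at y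
   exceeds c, it exceeds the quotient of g at y, so f decreases from x to y
   strictly faster than g: f y - g y < f x - g x <= lambda, i.e. y lies in
   M_1 = L_lambda(f - g) ([sublevel_of_steeper_descent]).  Hence restricting
   f to M_1 leaves its global slope at x unchanged.  (The hypothesis that
   L_lambda(f - g) meets dom f and dom g only guarantees that M_1 is a
   meaningful nonempty space; the argument does not need it.) *)

Lemma metric_dist_gt0 {R : realType} {M : Type} {rho : M -> M -> R} {x y : M} :
  is_metric rho -> y <> x -> 0 < rho x y.
Proof.
move=> [rho_ge0 rho_eq0 _ _] yx.
rewrite lt_neqAle rho_ge0 andbT; apply/eqP => /esym/rho_eq0 xy.
exact: yx.
Qed.

Lemma max0_div_lt {R : realType} {a b r : R} :
  0 < r -> Num.max 0 b / r < Num.max 0 a / r -> b < a.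
Proof.
move=> r_gt0; rewrite ltr_pM2r ?invr_gt0 //.
by rewrite /Num.max; case: ifP => hb; case: ifP => ha; lra.
Qed.

Section GlobalSlopeOn.
Variables (R : realType) (M : Type) (rho : M -> M -> R).
Implicit Types (A B : set M) (f : M -> \bar R) (x y : M).

Lemma global_slope_on_ge0 A f x : (0 <= global_slope_on rho A f x)%E.
Proof. by apply: ereal_sup_ubound; left. Qed.

Lemma slope_term_ge0 f x y : 0 <= rho x y -> (0 <= slope_term rho f x y)%E.
Proof.
move=> rho_ge0; rewrite /slope_term; case: (f y) => [r||] //=.
by rewrite lee_fin divr_ge0 // le_max lexx.
Qed.

Lemma slope_term_le_global_slope_on A f x y :
  A y -> y <> x -> (slope_term rho f x y <= global_slope_on rho A f x)%E.
Proof. by move=> Ay yx; apply: ereal_sup_ubound; right; exists y. Qed.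

Lemma global_slope_on_subset A B f x :
  A `<=` B -> (global_slope_on rho A f x <= global_slope_on rho B f x)%E.
Proof.
move=> AB; apply: ereal_sup_le => e [->|[y [Ay yx] <-]]; first by left.
by right; exists y => //; split => //; exact: AB.
Qed.

Lemma global_slope_on_eq_of_steep A B f x (c : \bar R) :
  A `<=` B -> (c < global_slope_on rho B f x)%E ->
  (forall y, B y -> y <> x -> (c < slope_term rho f x y)%E -> A y) ->
  global_slope_on rho A f x = global_slope_on rho B f x.
Proof.
move=> AB c_lt steep_in_A; apply/eqP; rewrite eq_le global_slope_on_subset //=.
rewrite leNgt; apply/negP => slopeA_lt.
have : (Order.max c (global_slope_on rho A f x) < global_slope_on rho B f x)%E.
  by rewrite gt_max c_lt slopeA_lt.
case/ereal_sup_gt => e [->|[y [By yx] <-]]; rewrite gt_max => /andP[c_lt_e lt_e].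
  by move: (le_lt_trans (global_slope_on_ge0 A f x) lt_e); rewrite ltxx.
have := @slope_term_le_global_slope_on A f x y (steep_in_A y By yx c_lt_e) yx.
by rewrite leNgt lt_e.
Qed.

End GlobalSlopeOn.

Lemma sublevel_of_steeper_descent {R : realType} {M : Type}
  {rho : M -> M -> R} {f g : M -> \bar R} {lam : R} {x y : M} :
  is_metric rho -> no_minfty f -> no_minfty g ->
  sublevel f g lam x -> dom g x -> y <> x ->
  (slope_term rho g x y < slope_term rho f x y)%E -> sublevel f g lam y.
Proof.
move=> metric f_nminfty g_nminfty [fx_fin x_sub] gx_fin yx steep.
have rho_gt0 := metric_dist_gt0 metric yx.
have [fx Efx] : exists fx, f x = fx%:E.
  by move: fx_fin (f_nminfty x); case: (f x) => [r||] // _ _; exists r.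
have [gx Egx] : exists gx, g x = gx%:E.
  by move: gx_fin (g_nminfty x); rewrite /dom /=; case: (g x) => [r||] // _ _; exists r.
have slope_ge0 (h : M -> \bar R) : (0 <= slope_term rho h x y)%E :=
  @slope_term_ge0 R M rho h x y (ltW rho_gt0).
have [fy Efy] : exists fy, f y = fy%:E.
  move: (le_lt_trans (slope_ge0 g) steep) (f_nminfty y).
  rewrite /slope_term; case: (f y) => [r _ _||]; last by [].
  - by exists r.
  - by rewrite ltxx.
rewrite /sublevel /=; split; first by rewrite Efy ltry.
case Egy: (g y) => [gy||]; [right | by left | by move: (g_nminfty y); rewrite Egy].
move: steep; rewrite /slope_term Efx Egx Efy Egy /= lte_fin.
move=> /(max0_div_lt rho_gt0) descent.
rewrite -EFinB lee_fin.
move: x_sub; rewrite Efx Egx -EFinB lee_fin; case => // x_le.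
lra.
Qed.

Theorem lemma2p5 (R : realType) (M : Type) (rho : M -> M -> R)
  (f g : M -> \bar R) (lam : R) (x : M) :
  is_metric rho -> no_minfty f -> no_minfty g ->
  (sublevel f g lam `&` dom f `&` dom g !=set0) ->
  sublevel f g lam x -> dom g x ->
  (global_slope rho g x < global_slope rho f x)%E ->
  global_slope_on rho (sublevel f g lam) f x = global_slope rho f x.
Proof.
move=> metric f_nminfty g_nminfty _ x_sub gx_fin slope_lt.
apply: (@global_slope_on_eq_of_steep _ _ rho _ setT f x (global_slope rho g x)).
- by move=> y.
- exact: slope_lt.
move=> y _ yx steep.
apply: (sublevel_of_steeper_descent metric f_nminfty g_nminfty x_sub gx_fin yx).
apply: le_lt_trans steep.
exact: (@slope_term_le_global_slope_on _ _ rho setT).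
Qed.
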